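(* There is a bounded open subset $B_G$ of $X_G$ (with the topology induced from $C^1$), with $\phi(t)>0$ for all $\phi\in B_G$ and $t\in[-r,0]$, such that for every $\phi\in X_G$ there exists $t(\phi)\ge 0$ with $S_G(t,\phi)\in B_G$ for all $t\ge t(\phi)$.
   Context: Constants $\beta,\mu,\gamma,a>0$. The function $g:\mathbb{R}\to(0,\infty)$ is continuously differentiable with $0<\inf g(\mathbb{R})\le \sup g(\mathbb{R})<\infty$. The function $v:\mathbb{R}\to\mathbb{R}$ is continuously differentiable with $0<v_0\le v(x)\le v_U$ for all $x$. Fix $r>a/v_0$; $C^1=C^1([-r,0],\mathbb{R})$ with norm $|\phi|_1=\max|\phi|+\max|\phi'|$. Segments: $x_t(s)=x(t+s)$, $s\in[-r,0]$. For $\phi\in C([-r,0],\mathbb{R})$ let $\delta(\phi)$ be the unique $u\in(0,r)$ with $a=\int_{-u}^0 v(\phi(s))\,ds$. Define $G:C^1\to\mathbb{R}$ by $G(\phi)=\beta e^{-\mu\delta(\phi)}\frac{v(\phi(0))}{v(\phi(-\delta(\phi)))}g(\phi(-\delta(\phi)))-\gamma\phi(0)$, and $X_G=\{\phi\in C^1:\phi'(0)=G(\phi)\}$ (a closed $C^1$-submanifold of codimension 1 of $C^1$). Each $\phi\in X_G$ determines a unique maximal continuously differentiable solution $x^\phi$ of $x'(t)=G(x_t)$ for $t>0$, $x_0=\phi$, which exists for all $t\ge 0$, and $S_G(t,\phi)=x^\phi_t$ defines the associated semiflow on $X_G$. *)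

From Stdlib Require Import Reals Lra ClassicalEpsilon.
From Coquelicot Require Import Coquelicot.
Open Scope R_scope.

Definition deriv_within (D : R -> Prop) (f : R -> R) (x l : R) : Prop :=
  forall eps, 0 < eps -> exists del, 0 < del /\
    forall y, D y -> Rabs (y - x) < del ->
      Rabs (f y - f x - l * (y - x)) <= eps * Rabs (y - x).

Definition cont_within (D : R -> Prop) (f : R -> R) (x : R) : Prop :=
  forall eps, 0 < eps -> exists del, 0 < del /\
    forall y, D y -> Rabs (y - x) < del -> Rabs (f y - f x) < eps.

Definition C1_on (D : R -> Prop) (f df : R -> R) : Prop :=
  (forall x, D x -> cont_within D df x) /\
  (forall x, D x -> deriv_within D f x (df x)).

Definition Iseg (r : R) : R -> Prop := fun s => - r <= s <= 0.

Definition C1seg (r : R) (phi : R -> R) : Prop :=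
  exists dphi, C1_on (Iseg r) phi dphi.

(* The derivative phi' on [-r,0] (unique there since r > 0). *)
Definition dseg (r : R) (phi : R -> R) : R -> R :=
  fun s => epsilon (inhabits 0) (fun l => deriv_within (Iseg r) phi s l).

(* |phi|_1 = max|phi| + max|phi'| <= M  (maxima over [-r,0]). *)
Definition norm1_le (r : R) (phi : R -> R) (M : R) : Prop :=
  forall s s', Iseg r s -> Iseg r s' ->
    Rabs (phi s) + Rabs (dseg r phi s') <= M.

Definition delta (v : R -> R) (a r : R) (phi : R -> R) : R :=
  epsilon (inhabits 0)
    (fun u => 0 < u < r /\ RInt (fun s => v (phi s)) (- u) 0 = a).

Definition Gfun (beta mu gamma a r : R) (g v : R -> R) (phi : R -> R) : R :=
  let d := delta v a r phi in
  beta * exp (- mu * d) * (v (phi 0) / v (phi (- d))) * g (phi (- d))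
  - gamma * phi 0.

Definition XG (beta mu gamma a r : R) (g v : R -> R) (phi : R -> R) : Prop :=
  C1seg r phi /\ deriv_within (Iseg r) phi 0 (Gfun beta mu gamma a r g v phi).

Definition segment (x : R -> R) (t : R) : R -> R := fun s => x (t + s).

Definition is_solution (beta mu gamma a r : R) (g v : R -> R)
    (phi x : R -> R) : Prop :=
  (forall s, Iseg r s -> x s = phi s) /\
  exists dx, C1_on (fun s => - r <= s) x dx /\
    forall t, 0 < t -> dx t = Gfun beta mu gamma a r g v (segment x t).

From Stdlib Require Import Reals Lra ClassicalEpsilon.
From Coquelicot Require Import Coquelicot.
Open Scope R_scope.

(* Since 0 < delta < r, along every solution the birth term G(x_t) + gamma x(t)
   stays between c1 = beta e^(-mu r) (v0/vU) inf g > 0 and c2 = beta (vU/v0) sup g.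
   Comparing x' + gamma x with these constants (the function (x - c/gamma) e^(gamma t)
   is monotone) shows that x(t) eventually lies within any d > 0 of [c1/gamma, c2/gamma],
   and then x' = (x' + gamma x) - gamma x is bounded as well. So the segments enter, and
   stay in, the set of phi in X_G lying with a uniform margin inside the box
   c1/gamma - 2d < phi < c2/gamma + 2d, |phi'| < c2 - c1 + (gamma + 1) d; this set is
   open in X_G, bounded in C^1, and for d = c1/(4 gamma) it consists of positive functions. *)

Lemma deriv_within_interior (D : R -> Prop) f p l rho :
  0 < rho -> (forall y, Rabs (y - p) < rho -> D y) ->
  deriv_within D f p l -> is_derive f p l.
Proof.
  intros Hrho HD Hf. apply is_derive_Reals. intros eps Heps.
  destruct (Hf (eps / 2) ltac:(lra)) as [del [Hdel Hclose]].
  assert (Hmin : 0 < Rmin del rho) by (apply Rmin_pos; lra).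
  exists (mkposreal _ Hmin). intros h Hh0 Hh. simpl in Hh.
  pose proof (Rmin_l del rho). pose proof (Rmin_r del rho).
  specialize (Hclose (p + h)). replace (p + h - p) with h in Hclose by ring.
  specialize (Hclose (HD _ ltac:(replace (p + h - p) with h by ring; lra)) ltac:(lra)).
  assert (Hpos : 0 < Rabs h) by (apply Rabs_pos_lt; exact Hh0).
  replace ((f (p + h) - f p) / h - l) with ((f (p + h) - f p - l * h) / h) by (field; exact Hh0).
  rewrite Rabs_div by exact Hh0.
  apply (Rmult_lt_reg_r (Rabs h)); [exact Hpos|].
  unfold Rdiv. rewrite Rmult_assoc, Rinv_l by lra. nra.
Qed.

Lemma Iseg_point_at_distance r s h : 0 < h <= r / 2 -> Iseg r s ->
  exists y, Iseg r y /\ Rabs (y - s) = h.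
Proof.
  unfold Iseg. intros Hh Hs. destruct (Rle_dec s (- r / 2)).
  - exists (s + h). split; [lra|]. replace (s + h - s) with h by ring. apply Rabs_right; lra.
  - exists (s - h). split; [lra|]. replace (s - h - s) with (- h) by ring.
    rewrite Rabs_Ropp. apply Rabs_right; lra.
Qed.

Lemma deriv_within_Iseg_unique r f s l1 l2 : 0 < r -> Iseg r s ->
  deriv_within (Iseg r) f s l1 -> deriv_within (Iseg r) f s l2 -> l1 = l2.
Proof.
  intros Hr Hs H1 H2. destruct (Req_dec l1 l2) as [E|NE]; [exact E|exfalso].
  set (q := Rabs (l1 - l2)).
  assert (Hq : 0 < q) by (apply Rabs_pos_lt; lra).
  destruct (H1 (q / 4) ltac:(lra)) as [d1 [Hd1 Hy1]].
  destruct (H2 (q / 4) ltac:(lra)) as [d2 [Hd2 Hy2]].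
  set (h := Rmin (Rmin d1 d2) r / 2).
  assert (Hmin : 0 < Rmin (Rmin d1 d2) r) by (apply Rmin_pos; [apply Rmin_pos|]; lra).
  pose proof (Rmin_l (Rmin d1 d2) r). pose proof (Rmin_r (Rmin d1 d2) r).
  pose proof (Rmin_l d1 d2). pose proof (Rmin_r d1 d2).
  destruct (Iseg_point_at_distance r s h ltac:(unfold h; lra) Hs) as [y [Hy Hys]].
  specialize (Hy1 y Hy ltac:(unfold h in Hys; lra)).
  specialize (Hy2 y Hy ltac:(unfold h in Hys; lra)).
  assert (Htri : q * h <= Rabs (f y - f s - l2 * (y - s)) + Rabs (f y - f s - l1 * (y - s))).
  { unfold q. rewrite <- Hys, <- Rabs_mult.
    replace ((l1 - l2) * (y - s)) with
      ((f y - f s - l2 * (y - s)) + - (f y - f s - l1 * (y - s))) by ring.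
    rewrite <- (Rabs_Ropp (f y - f s - l1 * (y - s))). apply Rabs_triang. }
  rewrite Hys in Hy1, Hy2. assert (0 < h) by (unfold h; lra). nra.
Qed.

Lemma dseg_deriv_within r f s l : 0 < r -> Iseg r s ->
  deriv_within (Iseg r) f s l -> dseg r f s = l.
Proof.
  intros Hr Hs Hf. apply (deriv_within_Iseg_unique r f s); auto.
  apply (epsilon_spec (inhabits 0) (fun l => deriv_within (Iseg r) f s l)). now exists l.
Qed.

Lemma deriv_within_minus D f g s l1 l2 :
  deriv_within D f s l1 -> deriv_within D g s l2 ->
  deriv_within D (fun y => f y - g y) s (l1 - l2).
Proof.
  intros H1 H2 eps Heps.
  destruct (H1 (eps / 2) ltac:(lra)) as [d1 [Hd1 Hy1]].
  destruct (H2 (eps / 2) ltac:(lra)) as [d2 [Hd2 Hy2]].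
  exists (Rmin d1 d2). split; [apply Rmin_pos; lra|].
  intros y Hy Hys. pose proof (Rmin_l d1 d2). pose proof (Rmin_r d1 d2).
  specialize (Hy1 y Hy ltac:(lra)). specialize (Hy2 y Hy ltac:(lra)).
  replace (f y - g y - (f s - g s) - (l1 - l2) * (y - s)) with
    ((f y - f s - l1 * (y - s)) + - (g y - g s - l2 * (y - s))) by ring.
  eapply Rle_trans; [apply Rabs_triang|]. rewrite Rabs_Ropp. lra.
Qed.

Lemma deriv_within_segment r x t s l : 0 <= t ->
  deriv_within (fun z => - r <= z) x (t + s) l -> deriv_within (Iseg r) (segment x t) s l.
Proof.
  intros Ht Hx eps Heps. destruct (Hx eps Heps) as [del [Hdel Hclose]].
  exists del. split; [exact Hdel|]. unfold Iseg, segment. intros y Hy Hys.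
  replace (y - s) with (t + y - (t + s)) in * by ring. apply Hclose; lra.
Qed.

Lemma cont_within_segment r dx t s : 0 <= t ->
  cont_within (fun z => - r <= z) dx (t + s) -> cont_within (Iseg r) (segment dx t) s.
Proof.
  intros Ht Hdx eps Heps. destruct (Hdx eps Heps) as [del [Hdel Hclose]].
  exists del. split; [exact Hdel|]. unfold Iseg, segment. intros y Hy Hys.
  apply Hclose; [lra|]. replace (t + y - (t + s)) with (y - s) by ring. exact Hys.
Qed.

Lemma RInt_reaches_level (f : R -> R) r a v0 : 0 < a -> 0 < v0 -> a / v0 < r ->
  (forall s, - r <= s -> continuous f s) -> (forall s, v0 <= f s) ->
  exists u, 0 < u < r /\ RInt f (- u) 0 = a.
Proof.
  intros Ha Hv0 Hr Hcont Hf.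
  assert (Hav : 0 < a / v0) by (apply Rdiv_lt_0_compat; lra).
  set (r' := (a / v0 + r) / 2).
  assert (Hex : forall w, - r <= w -> ex_RInt f w 0).
  { intros w Hw. apply (ex_RInt_continuous (V := R_CompleteNormedModule)).
    intros z Hz. apply Hcont. pose proof (Rmin_glb w 0 (- r) ltac:(lra) ltac:(lra)). lra. }
  assert (Hcont_int : forall w, - r' <= w <= 0 -> continuity_pt (fun w => a - RInt f w 0) w).
  { intros w Hw. apply continuity_pt_minus; [apply continuity_pt_const; now intros ??|].
    apply continuity_pt_filterlim, (continuous_RInt_2 f w 0).
    assert (Hgap : 0 < r - r') by (unfold r'; lra).
    exists (mkposreal _ Hgap). intros y Hy.
    apply (RInt_correct (V := R_CompleteNormedModule)), Hex.
    apply Rabs_lt_between' in Hy. simpl in Hy. lra. }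
  assert (Hbeyond : a < RInt f (- r') 0).
  { assert (Hle : RInt (fun _ => v0) (- r') 0 <= RInt f (- r') 0).
    { apply RInt_le; [unfold r'; lra | apply ex_RInt_const | apply Hex; unfold r'; lra |].
      intros; apply Hf. }
    rewrite RInt_const in Hle. unfold scal in Hle; simpl in Hle; unfold mult in Hle; simpl in Hle.
    assert (a = a / v0 * v0) by (field; lra). unfold r' in Hle |- *. nra. }
  destruct (Ranalysis5.IVT_interv (fun w => a - RInt f w 0) (- r') 0)
    as [z [Hz Hz0]]; cbv beta in *; [exact Hcont_int | unfold r'; lra | lra | |].
  - rewrite RInt_point. unfold zero; simpl. lra.
  - assert (Hz_ne : z <> 0).
    { intros ->. rewrite RInt_point in Hz0. unfold zero in Hz0; simpl in Hz0. lra. }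
    exists (- z). rewrite Ropp_involutive. unfold r' in Hz. lra.
Qed.

Lemma delta_bounds (v : R -> R) a r v0 phi : 0 < a -> 0 < v0 -> a / v0 < r ->
  (forall s, - r <= s -> continuous (fun s => v (phi s)) s) -> (forall y, v0 <= v y) ->
  0 < delta v a r phi < r.
Proof.
  intros Ha Hv0 Hr Hcont Hv.
  destruct (RInt_reaches_level _ r a v0 Ha Hv0 Hr Hcont (fun s => Hv (phi s))) as [u Hu].
  exact (proj1 (epsilon_spec (inhabits 0)
    (fun u => 0 < u < r /\ RInt (fun s => v (phi s)) (- u) 0 = a) (ex_intro _ u Hu))).
Qed.

Lemma Rdiv_le_bounds p q P Q : 0 < p <= P -> 0 < q <= Q -> p / Q <= P / q.
Proof.
  intros Hp Hq. unfold Rdiv. apply Rmult_le_compat; try lra.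
  - left; apply Rinv_0_lt_compat; lra.
  - apply Rinv_le_contravar; lra.
Qed.

Lemma Gfun_forcing_bounds beta mu gamma a r (g v : R -> R) v0 vU m M phi :
  0 < beta -> 0 < mu -> 0 < v0 -> (forall y, v0 <= v y <= vU) ->
  0 < m -> (forall y, m <= g y <= M) -> 0 < delta v a r phi < r ->
  beta * exp (- mu * r) * (v0 / vU) * m <= Gfun beta mu gamma a r g v phi + gamma * phi 0
  <= beta * (vU / v0) * M.
Proof.
  intros Hbeta Hmu Hv0 Hv Hm Hg Hd. unfold Gfun. set (d := delta v a r phi) in *.
  pose proof (Hv (phi 0)). pose proof (Hv (phi (- d))). pose proof (Hg (phi (- d))).
  set (E := exp (- mu * d)). set (Q := v (phi 0) / v (phi (- d))). set (y := g (phi (- d))) in *.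
  replace (beta * E * Q * y - gamma * phi 0 + gamma * phi 0) with (beta * (E * Q * y)) by ring.
  assert (HE : exp (- mu * r) <= E <= 1).
  { unfold E. rewrite <- exp_0. split; left; apply exp_increasing; nra. }
  assert (HQ : v0 / vU <= Q <= vU / v0) by (unfold Q; split; apply Rdiv_le_bounds; lra).
  pose proof (exp_pos (- mu * r)).
  assert (0 < v0 / vU) by (apply Rdiv_lt_0_compat; lra).
  assert (0 < Q) by lra.
  rewrite !Rmult_assoc. split; apply Rmult_le_compat_l; try lra.
  - apply Rmult_le_compat; [lra | apply Rmult_le_pos; lra | lra |].
    apply Rmult_le_compat; lra.
  - replace (vU / v0 * M) with (1 * (vU / v0 * M)) by ring.
    apply Rmult_le_compat; [lra | apply Rmult_le_pos; lra | lra |].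
    apply Rmult_le_compat; lra.
Qed.

Lemma nondecreasing_of_derive_nonneg (y dy : R -> R) :
  (forall t, 0 < t -> is_derive y t (dy t)) -> (forall t, 0 < t -> 0 <= dy t) ->
  forall s t, 0 < s <= t -> y s <= y t.
Proof.
  intros Hy Hdy s t Hst.
  destruct (MVT_gen y s t dy) as [c [Hc Hmvt]]; cbv zeta in *;
    rewrite Rmin_left, Rmax_right in * by lra.
  - intros z Hz. apply Hy. lra.
  - intros z Hz. apply continuity_pt_filterlim, (ex_derive_continuous (V := R_NormedModule)).
    exists (dy z). apply Hy. lra.
  - pose proof (Hdy c ltac:(lra)). nra.
Qed.

Lemma linear_ode_lower_monotone (x dx : R -> R) gamma c : 0 < gamma ->
  (forall t, 0 < t -> is_derive x t (dx t)) ->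
  (forall t, 0 < t -> c <= dx t + gamma * x t) ->
  forall s t, 0 < s <= t ->
  (x s - c / gamma) * exp (gamma * s) <= (x t - c / gamma) * exp (gamma * t).
Proof.
  intros Hgamma Hx Hc.
  apply (nondecreasing_of_derive_nonneg (fun t => (x t - c / gamma) * exp (gamma * t))
    (fun t => (dx t + gamma * x t - c) * exp (gamma * t))).
  - intros t Ht. auto_derive.
    + now exists (dx t); apply Hx.
    + replace (Derive (fun u => x u) t) with (dx t) by (symmetry; now apply is_derive_unique, Hx).
      field. lra.
  - intros t Ht. apply Rmult_le_pos; [pose proof (Hc t Ht); lra | apply Rlt_le, exp_pos].
Qed.

Lemma exp_eventually_ge gamma K : 0 < gamma ->
  exists T, 0 <= T /\ forall t, T <= t -> K <= exp (gamma * t).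
Proof.
  intros Hgamma. exists (Rabs K / gamma). split.
  - apply Rdiv_le_0_compat; [apply Rabs_pos | lra].
  - intros t Ht. pose proof (exp_ineq1_le (gamma * t)). pose proof (Rle_abs K).
    apply (Rmult_le_compat_l gamma) in Ht; [|lra].
    replace (gamma * (Rabs K / gamma)) with (Rabs K) in Ht by (field; lra). lra.
Qed.

Lemma linear_ode_eventually_ge (x dx : R -> R) gamma c : 0 < gamma ->
  (forall t, 0 < t -> is_derive x t (dx t)) ->
  (forall t, 0 < t -> c <= dx t + gamma * x t) ->
  forall d, 0 < d -> exists T, 0 < T /\ forall t, T <= t -> c / gamma - d <= x t.
Proof.
  intros Hgamma Hx Hc d Hd.
  set (A := Rabs (x 1 - c / gamma) * exp (gamma * 1)).
  assert (HA : - A <= (x 1 - c / gamma) * exp (gamma * 1)).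
  { unfold A. pose proof (Rle_abs (- (x 1 - c / gamma))). rewrite Rabs_Ropp in *.
    pose proof (exp_pos (gamma * 1)). nra. }
  destruct (exp_eventually_ge gamma (A / d) Hgamma) as [T0 [HT0 Hexp]].
  exists (Rmax 1 T0). split; [pose proof (Rmax_l 1 T0); lra|].
  intros t Ht. pose proof (Rmax_l 1 T0). pose proof (Rmax_r 1 T0).
  pose proof (linear_ode_lower_monotone x dx gamma c Hgamma Hx Hc 1 t ltac:(lra)) as Hmono.
  specialize (Hexp t ltac:(lra)). pose proof (exp_pos (gamma * t)).
  assert (HAd : A <= d * exp (gamma * t)).
  { apply (Rmult_le_compat_l d) in Hexp; [|lra].
    replace (d * (A / d)) with A in Hexp by (field; lra). exact Hexp. }
  nra.
Qed.

Lemma linear_ode_eventually_between (x dx : R -> R) gamma c1 c2 : 0 < gamma ->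
  (forall t, 0 < t -> is_derive x t (dx t)) ->
  (forall t, 0 < t -> c1 <= dx t + gamma * x t <= c2) ->
  forall d, 0 < d -> exists T, 0 < T /\ forall t, T <= t -> c1 / gamma - d <= x t <= c2 / gamma + d.
Proof.
  intros Hgamma Hx Hc d Hd.
  destruct (linear_ode_eventually_ge x dx gamma c1 Hgamma Hx
    (fun t Ht => proj1 (Hc t Ht)) d Hd) as [T1 [HT1 Hlow]].
  destruct (linear_ode_eventually_ge (fun t => - x t) (fun t => - dx t) gamma (- c2) Hgamma)
    with (d := d) as [T2 [HT2 Hup]]; [| |exact Hd|].
  - intros t Ht. now apply (is_derive_opp x), Hx.
  - intros t Ht. pose proof (Hc t Ht). lra.
  - exists (Rmax T1 T2). split; [pose proof (Rmax_l T1 T2); lra|].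
    intros t Ht. pose proof (Rmax_l T1 T2). pose proof (Rmax_r T1 T2).
    specialize (Hlow t ltac:(lra)). specialize (Hup t ltac:(lra)).
    replace (- c2 / gamma) with (- (c2 / gamma)) in Hup by (field; lra). lra.
Qed.

(* The uniform margin [e] is what makes this set open for the [C^1] norm. *)
Definition XG_box (beta mu gamma a r : R) (g v : R -> R) (L U K : R) (phi : R -> R) : Prop :=
  XG beta mu gamma a r g v phi /\
  exists e, 0 < e /\ forall s, Iseg r s ->
    L + e <= phi s <= U - e /\ Rabs (dseg r phi s) <= K - e.

Section Box.
Context {beta mu gamma a r : R} {g v : R -> R} {L U K : R}.

Lemma XG_box_open phi : 0 < r -> XG_box beta mu gamma a r g v L U K phi ->
  exists eps, 0 < eps /\ forall psi, XG beta mu gamma a r g v psi ->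
    norm1_le r (fun s => psi s - phi s) eps -> XG_box beta mu gamma a r g v L U K psi.
Proof.
  intros Hr [[[dphi [_ Hdphi]] _] [e [He Hphi]]].
  exists (e / 2). split; [lra|]. intros psi Hpsi Hnear. split; [exact Hpsi|].
  destruct Hpsi as [[dpsi [_ Hdpsi]] _].
  exists (e / 2). split; [lra|]. intros s Hs.
  specialize (Hnear s s Hs Hs). destruct (Hphi s Hs) as [Hval Hder].
  rewrite (dseg_deriv_within r _ s _ Hr Hs
    (deriv_within_minus _ _ _ _ _ _ (Hdpsi s Hs) (Hdphi s Hs))) in Hnear.
  rewrite (dseg_deriv_within r _ s _ Hr Hs (Hdphi s Hs)) in Hder.
  rewrite (dseg_deriv_within r _ s _ Hr Hs (Hdpsi s Hs)).
  pose proof (Rabs_pos (psi s - phi s)). pose proof (Rabs_pos (dpsi s - dphi s)).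
  assert (Hclose : Rabs (psi s - phi s) <= e / 2) by lra.
  apply Rabs_le_between' in Hclose. split; [lra|].
  replace (dpsi s) with ((dpsi s - dphi s) + dphi s) by ring.
  eapply Rle_trans; [apply Rabs_triang | lra].
Qed.

Lemma XG_box_bounded phi : 0 <= L -> XG_box beta mu gamma a r g v L U K phi ->
  norm1_le r phi (U + K).
Proof.
  intros HL [_ [e [He Hphi]]] s s' Hs Hs'.
  destruct (Hphi s Hs) as [Hval _]. destruct (Hphi s' Hs') as [_ Hder].
  rewrite Rabs_right by lra. lra.
Qed.

Lemma XG_box_pos phi s : 0 <= L -> XG_box beta mu gamma a r g v L U K phi ->
  Iseg r s -> 0 < phi s.
Proof. intros HL [_ [e [He Hphi]]] Hs. destruct (Hphi s Hs). lra. Qed.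

End Box.

Section Solution.
Context {beta mu gamma a r : R} {g v x dx : R -> R}.
Hypothesis Hr : 0 < r.
Hypothesis Hx : C1_on (fun s => - r <= s) x dx.
Hypothesis Hode : forall t, 0 < t -> dx t = Gfun beta mu gamma a r g v (segment x t).

Lemma solution_is_derive t : - r < t -> is_derive x t (dx t).
Proof.
  intros Ht. apply (deriv_within_interior (fun z => - r <= z) x t (dx t) (t + r)); [lra| |].
  - intros y Hy. apply Rabs_lt_between' in Hy. lra.
  - apply (proj2 Hx). lra.
Qed.

Lemma dseg_segment_solution t s : 0 <= t -> Iseg r s -> dseg r (segment x t) s = dx (t + s).
Proof.
  intros Ht Hs. apply dseg_deriv_within; [exact Hr | exact Hs |].
  apply deriv_within_segment; [exact Ht|]. apply (proj2 Hx). unfold Iseg in Hs. lra.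
Qed.

Lemma segment_solution_XG t : 0 < t -> XG beta mu gamma a r g v (segment x t).
Proof.
  intros Ht. split.
  - exists (segment dx t). split; intros s Hs; unfold Iseg in Hs.
    + apply cont_within_segment; [lra|]. apply (proj1 Hx). lra.
    + apply deriv_within_segment; [lra|]. apply (proj2 Hx). lra.
  - rewrite <- (Hode t Ht). apply deriv_within_segment; [lra|].
    rewrite Rplus_0_r. apply (proj2 Hx). lra.
Qed.

Lemma solution_forcing_bounds v0 vU m M : 0 < beta -> 0 < mu -> 0 < a ->
  0 < v0 -> a / v0 < r -> (forall y, v0 <= v y <= vU) -> (forall y, continuous v y) ->
  0 < m -> (forall y, m <= g y <= M) ->
  forall t, 0 < t ->
  beta * exp (- mu * r) * (v0 / vU) * m <= dx t + gamma * x t <= beta * (vU / v0) * M.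
Proof.
  intros Hbeta Hmu Ha Hv0 Hrv Hv Hvcont Hm Hg t Ht.
  assert (Hdelta : 0 < delta v a r (segment x t) < r).
  { apply (delta_bounds v a r v0); [exact Ha | exact Hv0 | exact Hrv | | intros y; apply Hv].
    intros s Hs. apply (continuous_comp (segment x t) v); [| apply Hvcont].
    apply (continuous_comp (fun s => t + s) x).
    - apply (ex_derive_continuous (V := R_NormedModule)). auto_derive. exact I.
    - apply (ex_derive_continuous (V := R_NormedModule)). exists (dx (t + s)).
      apply solution_is_derive. lra. }
  rewrite (Hode t Ht).
  replace (x t) with (segment x t 0) by (unfold segment; f_equal; ring).
  exact (Gfun_forcing_bounds beta mu gamma a r g v v0 vU m M _ Hbeta Hmu Hv0 Hv Hm Hg Hdelta).
Qed.

Lemma solution_eventually_in_XG_box c1 c2 : 0 < gamma ->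
  (forall t, 0 < t -> c1 <= dx t + gamma * x t <= c2) ->
  forall d, 0 < d -> exists T, 0 <= T /\ forall t, T <= t ->
    XG_box beta mu gamma a r g v
      (c1 / gamma - 2 * d) (c2 / gamma + 2 * d) (c2 - c1 + (gamma + 1) * d) (segment x t).
Proof.
  intros Hgamma Hforce d Hd.
  destruct (linear_ode_eventually_between x dx gamma c1 c2 Hgamma
    (fun t Ht => solution_is_derive t ltac:(lra)) Hforce d Hd) as [T [HT Hbetween]].
  exists (T + r). split; [lra|]. intros t Ht.
  split; [apply segment_solution_XG; lra|].
  exists d. split; [exact Hd|]. intros s Hs.
  rewrite (dseg_segment_solution t s ltac:(lra) Hs). unfold segment, Iseg in *.
  destruct (Hbetween (t + s) ltac:(lra)) as [Hlow Hup].
  destruct (Hforce (t + s) ltac:(lra)) as [Hf1 Hf2].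
  split; [lra|].
  apply (Rmult_le_compat_l gamma) in Hlow, Hup; try lra.
  replace (gamma * (c1 / gamma - d)) with (c1 - gamma * d) in Hlow by (field; lra).
  replace (gamma * (c2 / gamma + d)) with (c2 + gamma * d) in Hup by (field; lra).
  apply Rabs_le_between. lra.
Qed.

End Solution.

Theorem corollary3p3 (beta mu gamma a : R) (g v : R -> R) (v0 vU r : R) :
  0 < beta -> 0 < mu -> 0 < gamma -> 0 < a ->
  (exists dg : R -> R, (forall x, derivable_pt_lim g x (dg x)) /\ continuity dg) ->
  (exists m M, 0 < m /\ forall x, m <= g x <= M) ->
  (exists dv : R -> R, (forall x, derivable_pt_lim v x (dv x)) /\ continuity dv) ->
  0 < v0 -> (forall x, v0 <= v x <= vU) ->
  a / v0 < r ->
  exists B : (R -> R) -> Prop,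
    (* B is a subset of X_G *)
    (forall phi, B phi -> XG beta mu gamma a r g v phi) /\
    (* B is open in X_G (topology induced by |.|_1) *)
    (forall phi, B phi -> exists eps, 0 < eps /\
       forall psi, XG beta mu gamma a r g v psi ->
         norm1_le r (fun s => psi s - phi s) eps -> B psi) /\
    (* B is bounded in C^1 *)
    (exists M, forall phi, B phi -> norm1_le r phi M) /\
    (* positivity *)
    (forall phi, B phi -> forall s, Iseg r s -> 0 < phi s) /\
    (* B absorbs every trajectory of the semiflow S_G *)
    (forall phi, XG beta mu gamma a r g v phi ->
       forall x, is_solution beta mu gamma a r g v phi x ->
         exists T, 0 <= T /\ forall t, T <= t -> B (segment x t)).
Proof.
  intros Hbeta Hmu Hgamma Ha _ [m [M [Hm Hg]]] [dv [Hdv _]] Hv0 Hv Hr.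
  assert (Hr0 : 0 < r) by (assert (0 < a / v0) by (apply Rdiv_lt_0_compat; lra); lra).
  assert (Hvcont : forall y, continuous v y).
  { intros y. apply (ex_derive_continuous (V := R_NormedModule)).
    exists (dv y). apply is_derive_Reals, Hdv. }
  set (c1 := beta * exp (- mu * r) * (v0 / vU) * m).
  set (c2 := beta * (vU / v0) * M).
  assert (Hc1 : 0 < c1).
  { pose proof (Hv 0). pose proof (exp_pos (- mu * r)).
    assert (0 < v0 / vU) by (apply Rdiv_lt_0_compat; lra).
    unfold c1. apply Rmult_lt_0_compat; [|lra].
    apply Rmult_lt_0_compat; [apply Rmult_lt_0_compat|]; lra. }
  set (d := c1 / (4 * gamma)).
  assert (Hd : 0 < d) by (apply Rdiv_lt_0_compat; lra).
  assert (HL : 0 <= c1 / gamma - 2 * d).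
  { replace (c1 / gamma - 2 * d) with (c1 / (2 * gamma)) by (unfold d; field; lra).
    apply Rdiv_le_0_compat; lra. }
  exists (XG_box beta mu gamma a r g v
    (c1 / gamma - 2 * d) (c2 / gamma + 2 * d) (c2 - c1 + (gamma + 1) * d)).
  split; [|split; [|split; [|split]]].
  - now intros phi [Hphi _].
  - intros phi. exact (XG_box_open phi Hr0).
  - exists (c2 / gamma + 2 * d + (c2 - c1 + (gamma + 1) * d)).
    intros phi. exact (XG_box_bounded phi HL).
  - intros phi Hphi s. exact (XG_box_pos phi s HL Hphi).
  - intros phi _ x [_ [dx [Hx Hode]]].
    apply (solution_eventually_in_XG_box Hr0 Hx Hode c1 c2 Hgamma); [|exact Hd].
    exact (solution_forcing_bounds Hx Hode v0 vU m M Hbeta Hmu Ha Hv0 Hr Hv Hvcont Hm Hg).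
Qed.
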